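(* Let $A\subseteq\mathbb{N}$ be a sum-dominant set with $|A|=6$. If there exist distinct $m_1, m_2, m_3\in A$ such that $m_2-m_1 = m_3-m_2$, then $A-A$ contains at most $7$ distinct positive elements.
   Context: For a finite set $A\subseteq\mathbb{N}$, the sum set is $A+A=\{a_i+a_j : a_i,a_j\in A\}$ and the difference set is $A-A=\{a_i-a_j : a_i,a_j\in A\}$. The set $A$ is called sum-dominant if $|A+A|>|A-A|$. *)

From HB Require Import structures.
From mathcomp Require Import all_boot all_order all_algebra.
From mathcomp Require Import finmap.
Set Implicit Arguments. Unset Strict Implicit. Unset Printing Implicit Defensive.
Import Order.TTheory GRing.Theory Num.Theory.
Local Open Scope fset_scope.

Definition sumset (A : {fset nat}) : {fset nat} :=
  [fset (a + b)%N | a in A, b in A].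

(* Difference set A - A = { a_i - a_j : a_i, a_j in A }, taken in the
   integers (true subtraction, not truncated). *)
Definition diffset (A : {fset nat}) : {fset int} :=
  [fset ((a%:Z) - (b%:Z))%R | a in A, b in A].

Definition sum_dominant (A : {fset nat}) : Prop :=
  (#|` diffset A| < #|` sumset A|)%N.

From HB Require Import structures.
From mathcomp Require Import all_boot all_order all_algebra.
From mathcomp Require Import finmap.
From mathcomp Require Import zify.
Import Order.TTheory GRing.Theory Num.Theory.
Local Open Scope fset_scope.
Set Implicit Arguments. Unset Strict Implicit. Unset Printing Implicit Defensive.

(* Count the additive energy E = #{(a, b, c, d) in A^4 | a + b = c + d}, which is
   also #{a - d = c - b}, through the representation functions r+ of A + A and r- of
   A - A: their squares sum to E and they themselves sum to |A|^2 = 36.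
   Since r-(0) = 6 and r^2 >= 3r - 2, E >= 128 - 2|A - A|.
   If some s has r+(s) = 6, then A = s - A, so A + A = s + (A - A) and A is not
   sum-dominant.  Otherwise 1 <= r+ <= 5 on A + A, where r^2 + 8 <= 6r + 3[r odd],
   and r+(s) is odd only when s = 2a with a in A; hence E <= 234 - 8|A + A|.
   With |A + A| > |A - A| this gives |A - A| <= 16, and A - A is 0 together with
   pairs +-d, so it has at most 7 positive elements. *)

Definition fiber_card (X : finType) (V : eqType) (f : X -> V) (v : V) : nat :=
  #|[pred x | f x == v]|.

Definition collisions (X : finType) (V : eqType) (f : X -> V) : nat :=
  #|[pred q : X * X | f q.1 == f q.2]|.

Section Fibers.
Variables (X : finType) (V : choiceType) (f : X -> V) (S : {fset V}).
Hypothesis f_in : forall x, f x \in S.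

Lemma partition_sum_fset (G : X -> nat) :
  \sum_x G x = \sum_(v <- S) \sum_(x | f x == v) G x.
Proof.
rewrite (exchange_big_dep xpredT) //=; apply: eq_bigr => x _.
rewrite (eq_bigl (pred1 (f x))) => [|v]; last by rewrite /= eq_sym.
by rewrite -big_filter filter_pred1_uniq ?f_in ?big_seq1.
Qed.

Lemma card_fibers : #|X| = \sum_(v <- S) fiber_card f v.
Proof.
by rewrite -sum1_card (partition_sum_fset (fun=> 1)); apply: eq_bigr => v _; rewrite sum1_card.
Qed.

Lemma collisions_fibers : collisions f = \sum_(v <- S) fiber_card f v ^ 2.
Proof.
rewrite /collisions -sum1_card big_mkcond /=.
rewrite -(pair_bigA _ (fun x y => (f x == f y : nat))) /=.
rewrite (eq_bigr (fun x => fiber_card f (f x))) => [|x _]; last first.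
  by rewrite /fiber_card -sum1_card [RHS]big_mkcond; apply: eq_bigr => y _; rewrite eq_sym.
rewrite partition_sum_fset; apply: eq_bigr => v _.
by rewrite (eq_bigr (fun=> fiber_card f v)) => [|x /eqP ->]; rewrite ?sum_nat_const ?mulnn.
Qed.

End Fibers.

Lemma odd_fiber_sym (X : finType) (V : eqType) (f : X * X -> V) (v : V) :
  (forall x y, f (x, y) = f (y, x)) ->
  odd (fiber_card f v) = odd (fiber_card (fun x => f (x, x)) v).
Proof.
move=> f_sym; pose F p := (f p == v : nat).
pose lt (p : X * X) := (enum_rank p.1 < enum_rank p.2)%N.
have -> : fiber_card f v = \sum_p F p by rewrite /fiber_card -sum1_card big_mkcond.
rewrite (bigID lt) /= [\sum_(p | ~~ lt p) _](bigID (fun p => lt (p.2, p.1))) /=.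
have swap_inj : injective (fun p : X * X => (p.2, p.1)) by move=> [? ?] [? ?] [-> ->].
have -> : \sum_(p | ~~ lt p && lt (p.2, p.1)) F p = \sum_(p | lt p) F p.
  rewrite (reindex_inj swap_inj) /=; apply: eq_big => -[x y] /=.
    by rewrite /lt /=; case: ltngtP.
  by rewrite /F f_sym.
have -> : \sum_(p | ~~ lt p && ~~ lt (p.2, p.1)) F p = \sum_(p | p.1 == p.2) F p.
  apply: eq_bigl => -[x y]; rewrite /lt /=.
  have [->|neq_xy] := eqVneq x y; first by rewrite ltnn.
  by case: ltngtP => // /ord_inj/enum_rank_inj eq_xy; rewrite eq_xy eqxx in neq_xy.
have -> : \sum_(p | p.1 == p.2) F p = \sum_x F (x, x).
  transitivity (\sum_x \sum_(y | x == y) F (x, y)).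
    by rewrite pair_big_dep; apply: eq_big => -[].
  by apply: eq_bigr => x _; rewrite (big_pred1 x) // => y; rewrite /= eq_sym.
rewrite /fiber_card -sum1_card [in RHS]big_mkcond /=.
by rewrite addnA addnn oddD odd_double; congr odd.
Qed.

Lemma sqr_add8_le r : (0 < r <= 5)%N -> (r ^ 2 + 8 <= 6 * r + 3 * odd r)%N.
Proof. by case: r => [|[|[|[|[|[|r]]]]]]. Qed.

Section SumAndDifferenceSets.
Variable A : {fset nat}.
Local Notation n := #|` A|.

Definition sum_rep (p : A * A) : nat := val p.1 + val p.2.
Definition diff_rep (p : A * A) : int := ((val p.1)%:Z - (val p.2)%:Z)%R.

Lemma sum_rep_in p : sum_rep p \in sumset A.
Proof. by apply: in_imfset2 => /=. Qed.

Lemma diff_rep_in p : diff_rep p \in diffset A.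
Proof. by apply: in_imfset2 => /=. Qed.

Lemma card_pairs : #|{: A * A}| = n ^ 2.
Proof. by rewrite card_prod -cardfE mulnn. Qed.

Lemma collisions_sum_diff_rep : collisions sum_rep = collisions diff_rep.
Proof.
pose h (q : (A * A) * (A * A)) := ((q.1.1, q.2.2), (q.2.1, q.1.2)).
have h_inj : injective h by move=> [[? ?] [? ?]] [[? ?] [? ?]] [-> -> -> ->].
rewrite /collisions -!sum1_card (reindex_inj h_inj); apply: eq_bigl => -[[a b] [c d]].
by rewrite !inE /sum_rep /diff_rep /=; apply/eqP/eqP; lia.
Qed.

Lemma zero_in_diffset : 0 < n -> 0%R \in diffset A.
Proof.
rewrite cardfE => /card_gt0P [a _].
by have := diff_rep_in (a, a); rewrite /diff_rep subrr.
Qed.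

Lemma fiber_diff_rep0 : fiber_card diff_rep 0%R = n.
Proof.
have diag_inj : injective (fun a : A => (a, a)) by move=> a b [].
rewrite cardfE -(card_imset predT diag_inj); apply: eq_card => -[a b].
rewrite !inE /diff_rep /=; apply/eqP/imsetP => [ab0|[c _ [-> ->]]]; last by rewrite subrr.
move/eqP: ab0; rewrite subr_eq0 eqz_nat => /eqP/val_inj ->.
by exists b.
Qed.

Lemma collisions_diff_rep_ge : 0 < n ->
  4 * n ^ 2 + 2 <= collisions diff_rep + 2 * #|` diffset A| + 3 * n.
Proof.
move=> /zero_in_diffset D0; set D' := diffset A `\ 0%R; set r := fiber_card diff_rep.
have cardD : #|` diffset A| = #|` D'|.+1 by rewrite (cardfsD1 0%R) D0.
have sum_r : n ^ 2 = (n + \sum_(d <- D') r d)%N.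
  by rewrite -card_pairs (card_fibers diff_rep_in) (big_fsetD1 0%R D0) fiber_diff_rep0.
have sum_r2 : collisions diff_rep = (n ^ 2 + \sum_(d <- D') r d ^ 2)%N.
  by rewrite (collisions_fibers diff_rep_in) (big_fsetD1 0%R D0) fiber_diff_rep0.
have : 3 * \sum_(d <- D') r d <= \sum_(d <- D') r d ^ 2 + 2 * #|` D'|.
  rewrite -sum1_size !big_distrr -big_split /=; apply: leq_sum => d _.
  by case: (r d) => [|[|k]] //; nia. (* (r - 1) (r - 2) >= 0 *)
lia.
Qed.

Lemma fiber_sum_repE v :
  fiber_card sum_rep v = #|[set p.1 | p in [pred p | sum_rep p == v]]|.
Proof.
rewrite card_in_imset // => -[a b] [a' b']; rewrite !inE /sum_rep /=.
move=> /eqP <- + /= eq_a; rewrite -eq_a eqn_add2l => /eqP eq_b.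
by congr pair; apply: val_inj.
Qed.

Lemma fiber_sum_rep_le v : fiber_card sum_rep v <= n.
Proof. by rewrite fiber_sum_repE cardfE max_card. Qed.

Lemma fiber_sum_rep_full v : fiber_card sum_rep v = n ->
  {in A, forall a, exists2 b, b \in A & (a + b)%N = v}.
Proof.
rewrite fiber_sum_repE cardfE -cardsT => /subset_cardP/(_ (subsetT _)) im_all a aA.
have /imsetP [[a' b]] : [` aA] \in [set p.1 | p in [pred p | sum_rep p == v]].
  by rewrite im_all inE.
by rewrite inE /sum_rep => /eqP <- /= <-; exists (val b) => //; apply: fsvalP.
Qed.

Lemma card_sumset_le_diffset_sym v :
  {in A, forall a, exists2 b, b \in A & (a + b)%N = v} -> #|` sumset A| <= #|` diffset A|.
Proof.
move=> symA; pose shift (s : nat) : int := (s%:Z - v%:Z)%R.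
have <- : #|` [fset shift s | s in sumset A]| = #|` sumset A|.
  by apply/eqP/card_in_imfsetP => s t _ _; rewrite /shift; lia.
apply: fsubset_leq_card; apply/fsubsetP => _ /imfsetP [_ /imfset2P [a aA [b bA ->]] ->].
have [c cA bc] := symA b bA.
by apply/imfset2P; exists a => //; exists c => //; rewrite /shift -bc; lia.
Qed.

Lemma fiber_sum_rep_gt0 s : s \in sumset A -> 0 < fiber_card sum_rep s.
Proof.
case/imfset2P => a /= aA [b /= bA ->].
by apply/card_gt0P; exists ([` aA], [` bA]); rewrite inE.
Qed.

Lemma odd_fiber_sum_rep_le s :
  odd (fiber_card sum_rep s) <= fiber_card (fun a => sum_rep (a, a)) s.
Proof.
rewrite (odd_fiber_sym _ (fun a b => addnC (val a) (val b))).
by case: (fiber_card _ s) => // k; apply: leq_trans (leq_b1 _) _.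
Qed.

Lemma collisions_sum_rep_le : {in sumset A, forall s, fiber_card sum_rep s <= 5} ->
  collisions sum_rep + 8 * #|` sumset A| <= 6 * n ^ 2 + 3 * n.
Proof.
move=> le5; set r := fiber_card sum_rep; set e := fiber_card (fun a => sum_rep (a, a)).
have sum_r : n ^ 2 = \sum_(s <- sumset A) r s.
  by rewrite -card_pairs (card_fibers sum_rep_in).
have sum_e : n = \sum_(s <- sumset A) e s.
  by rewrite cardfE (card_fibers (fun a => sum_rep_in (a, a))).
rewrite (collisions_fibers sum_rep_in) sum_r sum_e -sum1_size !big_distrr -!big_split /=.
rewrite !big_seq; apply: leq_sum => s sS; rewrite muln1.
apply: leq_trans (sqr_add8_le _) _; first by rewrite fiber_sum_rep_gt0 ?le5.
by rewrite leq_add2l leq_mul2l odd_fiber_sum_rep_le orbT.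
Qed.

Lemma card_diffset_pos_lt :
  0 < n -> (#|` [fset d in diffset A | (0 < d)%R]|).*2 < #|` diffset A|.
Proof.
move=> /zero_in_diffset D0; set P := [fset d in diffset A | (0 < d)%R].
have -> : #|` diffset A| = (#|` P| + #|` [fset d in diffset A | ~~ (0 < d)%R]|)%N.
  by rewrite -!sum1_size -big_fsetIDcond.
rewrite -addnn ltn_add2l.
have card_negP : #|` [fset (- d)%R | d in P]| = #|` P|.
  by apply/eqP/card_in_imfsetP => x y _ _; apply: oppr_inj.
have negP0 : 0%R \notin [fset (- d)%R | d in P].
  apply/imfsetP => -[d /= dP d0]; have d_eq0 : d = 0%R by rewrite -[d]opprK -d0 oppr0.
  by move: dP; rewrite d_eq0 !inE ltxx andbF.
have negP_sub : 0%R |` [fset (- d)%R | d in P] `<=` [fset d in diffset A | ~~ (0 < d)%R].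
  apply/fsubsetP => _ /fset1UP [-> | /imfsetP [d /= dP ->]]; rewrite !inE.
    by rewrite D0 ltxx.
  move: dP; rewrite !inE => /andP [/imfset2P [a aA [b bA ->]] d_gt0].
  rewrite oppr_gt0 -leNgt ltW // andbT opprB.
  by apply/imfset2P; exists b => //; exists a.
by have := fsubset_leq_card negP_sub; rewrite cardfsU1 negP0 card_negP.
Qed.

End SumAndDifferenceSets.

Theorem lemma4 (A : {fset nat}) :
  sum_dominant A ->
  #|` A| = 6%N ->
  (exists m1 m2 m3 : nat,
     [/\ m1 \in A, m2 \in A, m3 \in A,
         [/\ m1 != m2, m2 != m3 & m1 != m3] &
         ((m2%:Z - m1%:Z) = (m3%:Z - m2%:Z))%R]) ->
  (#|` [fset d in diffset A | (0 < d)%R]| <= 7)%N.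
Proof.
rewrite /sum_dominant => sum_dom A6 _.
have A_gt0 : 0 < #|` A| by rewrite A6.
have pos_lt := card_diffset_pos_lt A_gt0.
have diff_lb := collisions_diff_rep_ge A_gt0.
have [/hasP [s _ /eqP full] | /hasPn not_full] :=
  boolP (has (fun s => fiber_card (@sum_rep A) s == 6) (sumset A)).
  have := card_sumset_le_diffset_sym (fiber_sum_rep_full (etrans full (esym A6))).
  by rewrite leqNgt sum_dom.
have le5 : {in sumset A, forall s, fiber_card (@sum_rep A) s <= 5}.
  move=> s sS; have := fiber_sum_rep_le A s.
  by rewrite A6 leq_eqVlt (negbTE (not_full s sS)).
have := collisions_sum_rep_le le5; rewrite collisions_sum_diff_rep.
move: diff_lb pos_lt; rewrite A6; lia.
Qed.
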